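(* Let $A>0$, $B\in\mathbb{R}$, $R>0$ with $0<4|B|R<\pi$, and $a_1(k)=1+\frac{A^2e^{4\mathrm{i} kR}}{4(k^2-B^2)}$. Let $\varphi$ denote the argument of $a_1$ defined as below. Then: 1) If $0<R<\frac{\pi}{2(4B^2+A^2)^{1/2}}$: $\varphi(k)\in(-\pi,\pi)$ for $k\in(-\infty,-|B|)$; $\lim_{k\uparrow-|B|}\varphi(k)=-\theta_{-|B|}$ with $\theta_{-|B|}\in(0,\pi)$; $\lim_{k\downarrow-|B|}\varphi(k)=\pi-\theta_{-|B|}$; and $\varphi(k)\in(0,\pi)$ for $k\in(-|B|,0)$. 2) If $\frac{(2n-1)\pi}{2(4B^2+A^2)^{1/2}}<R<\frac{(2n+1)\pi}{2(4B^2+A^2)^{1/2}}$ for some $n\in\mathbb{N}$, then with $\omega_{n+1}=-\infty$, $\omega_j=-\frac{(2j-1)\pi}{4R}$ ($j=1,\dots,n$), $\omega_0=-|B|$: $\varphi(\omega_{n-j+1})=(2j-1)\pi$ for $j=1,\dots,n$; $\varphi(k)\in(2\pi j-\pi,2\pi j+\pi)$ for $k\in(\omega_{n-j+1},\omega_{n-j})$, $j=0,\dots,n$; $\lim_{k\uparrow-|B|}\varphi(k)=2\pi n-\theta_{-|B|}$ with $\theta_{-|B|}\in(0,\pi)$; $\lim_{k\downarrow-|B|}\varphi(k)=2\pi n+\pi-\theta_{-|B|}$; and $\varphi(k)\in(2\pi n,2\pi n+\pi)$ for $k\in(-|B|,0)$. 3) $\lim_{k\uparrow0}\varphi(k)$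 equals: if $4B^2-A^2>0$, $0$ when $0<R<\frac{\pi}{2(4B^2+A^2)^{1/2}}$ and $2\pi n$ when $\frac{(2n-1)\pi}{2(4B^2+A^2)^{1/2}}<R<\frac{(2n+1)\pi}{2(4B^2+A^2)^{1/2}}$; if $4B^2-A^2<0$, $\pi$ when $0<R<\frac{\pi}{2(4B^2+A^2)^{1/2}}$ and $2\pi n+\pi$ when $\frac{(2n-1)\pi}{2(4B^2+A^2)^{1/2}}<R<\frac{(2n+1)\pi}{2(4B^2+A^2)^{1/2}}$.
   Context: $\varphi$ is the continuous branch of $\arg a_1(k)$ along the path that runs over the real axis from $-\infty$ to $0$, except that it bypasses the pole $k=-|B|$ along a small semicircle in the upper half-plane, normalized by $\varphi(k)\to0$ as $k\to-\infty$ (under the hypotheses $a_1$ does not vanish on this path). For $k\in(-\infty,0)\setminus\{-|B|\}$, $\varphi(k)$ is its value at the real point $k$. (In the paper this quantity is written as $\int_{-\infty}^kd\arg a_1$, and for $k>-|B|$ as $\int_{-|B|}^k d\arg a_1$.) *)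

From Stdlib Require Import Reals Lra.
From Coquelicot Require Import Coquelicot.
Open Scope R_scope.

Definition cexp (z : C) : C :=
  (exp (Re z) * cos (Im z), exp (Re z) * sin (Im z)).

Definition a1 (A B RR : R) (k : C) : C :=
  Cplus 1 (Cdiv (Cmult (RtoC (A ^ 2)) (cexp (Cmult (Cmult (RtoC 4) Ci) (Cmult k (RtoC RR)))))
                (Cmult (RtoC 4) (Cminus (Cmult k k) (RtoC (B ^ 2))))).

Definition is_arg (z : C) (t : R) : Prop :=
  z <> RtoC 0 /\ Re z = Cmod z * cos t /\ Im z = Cmod z * sin t.

(* the small upper semicircle around -|B| of radius eps, run from
   -|B|-eps (t = 0) to -|B|+eps (t = PI):  -|B| + eps e^{i(PI - t)} *)
Definition semicircle (B eps t : R) : C :=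
  (- Rabs B + eps * cos (PI - t), eps * sin (PI - t)).

(* phi is (the restriction to the real points of) the continuous branch of
   arg a_1 along the path (-oo,0) that bypasses the pole -|B| along a small
   semicircle in the upper half-plane, normalized by phi -> 0 at -oo. *)
Definition is_phi (A B RR : R) (phi : R -> R) : Prop :=
  (forall k, k < - Rabs B ->
     is_arg (a1 A B RR (RtoC k)) (phi k) /\ continuous phi k) /\
  (forall k, - Rabs B < k < 0 ->
     is_arg (a1 A B RR (RtoC k)) (phi k) /\ continuous phi k) /\
  filterlim phi (Rbar_locally m_infty) (locally 0) /\
  (exists eps0, 0 < eps0 <= Rabs B /\
     forall eps, 0 < eps < eps0 ->
       exists psi : R -> R,
         (forall t, 0 <= t <= PI ->
            is_arg (a1 A B RR (semicircle B eps t)) (psi t) /\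
            filterlim psi (within (fun u => 0 <= u <= PI) (locally t)) (locally (psi t))) /\
         psi 0 = phi (- Rabs B - eps) /\
         psi PI = phi (- Rabs B + eps)).

Definition omega (B RR : R) (n j : nat) : Rbar :=
  if Nat.eqb j 0 then Finite (- Rabs B)
  else if Nat.ltb n j then m_infty
  else Finite (- (2 * INR j - 1) * PI / (4 * RR)).

Definition Rcrit (A B : R) : R := 2 * sqrt (4 * B ^ 2 + A ^ 2).

From Stdlib Require Import Reals Lra Lia ZArith.
From Coquelicot Require Import Coquelicot.
Open Scope R_scope.

(** For real [k <> ±B], [a1 k = 1 + c k e^{4ikRR}] with [c k = A^2 / (4 (k^2 - B^2))].
    On [k < -|B|] we have [c > 0], so [a1 k] is a negative real only where [e^{4ikRR} = -1]
    and [c k > 1], that is at the nodes [ω_m = -(2m-1)π/(4RR)] with [2|ω_m| < sqrt(4B^2 + A^2)]: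
    exactly [ω_1, ..., ω_n] when [RR] lies in the [n]-th window. So between consecutive nodes
    the continuous argument [φ] cannot cross an odd multiple of [π] and stays in one strip
    [(2πj - π, 2πj + π)] (the strip [j = 0] near [-∞], since [φ -> 0] there); at a node it is
    an odd multiple of [π], and the sign of [Im a1 = c sin(4kRR)] on both sides of the node
    shows that it passes into the next strip.
    Near [-|B|], [a1 / c -> e^{-4i|B|RR}] from the left and [a1 / |c| -> -e^{-4i|B|RR}] from
    the right. Along the small semicircle [a1] is dominated by its pole, and its argument grows
    by an amount in [(0, 2π)]; together with [Im a1 > 0] on [(-|B|, 0)] this puts [φ] in
    [(2πn, 2πn + π)] there. Finally [a1 0 = 1 - A^2/(4B^2)] is real, which gives the limit at 0. *)

(** * Trigonometric strips *)

Lemma Z_eq_of_Rabs_lt_1 (p q : Z) : Rabs (IZR p - IZR q) < 1 -> p = q.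
Proof.
  intro h. apply Rabs_def2 in h. rewrite <- minus_IZR in h.
  destruct h as [h1 h2]. apply lt_IZR in h1. apply (lt_IZR (-1)) in h2. lia.
Qed.

Lemma sin_add_2PI_Z x q : sin (x + 2 * PI * IZR q) = sin x.
Proof.
  destruct (Z_le_gt_dec 0 q) as [h|h].
  - rewrite <- (Z2Nat.id q), <- INR_IZR_INZ by lia.
    replace (2 * PI * _) with (2 * INR (Z.to_nat q) * PI) by ring. apply sin_period.
  - rewrite <- (sin_period _ (Z.to_nat (- q))).
    rewrite INR_IZR_INZ, Z2Nat.id, opp_IZR by lia. f_equal; ring.
Qed.

Lemma cos_add_2PI_Z x q : cos (x + 2 * PI * IZR q) = cos x.
Proof.
  rewrite !cos_sin, <- (sin_add_2PI_Z (PI / 2 + x) q). f_equal; ring.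
Qed.

Lemma exists_2PI_Z_near x : exists q : Z, 2 * PI * IZR q - PI < x <= 2 * PI * IZR q + PI.
Proof.
  assert (hp := PI_RGT_0).
  destruct (archimed ((PI - x) / (2 * PI))) as [h1 h2].
  exists (1 - up ((PI - x) / (2 * PI)))%Z. rewrite minus_IZR.
  set (v := (PI - x) / (2 * PI)) in *. set (u := IZR (up v)) in *.
  assert (e : v * (2 * PI) = PI - x) by (unfold v; field; lra).
  split; nra.
Qed.

Lemma sin_pos_strip t q : 2 * PI * IZR q - PI < t <= 2 * PI * IZR q + PI -> 0 < sin t ->
  2 * PI * IZR q < t < 2 * PI * IZR q + PI.
Proof.
  intros ht hs.
  rewrite <- (sin_add_2PI_Z t (- q)), opp_IZR in hs.
  set (u := t + 2 * PI * - IZR q) in hs.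
  destruct (Rle_or_lt u 0) as [hu|hu].
  - destruct (Req_dec u 0) as [e|hu'].
    + rewrite e, sin_0 in hs; lra.
    + assert (sin u < 0) by (apply sin_lt_0_var; unfold u in *; lra). lra.
  - destruct (Req_dec u PI) as [e|hu'].
    + rewrite e, sin_PI in hs; lra.
    + unfold u in *; lra.
Qed.

Lemma sin_neg_strip t q : 2 * PI * IZR q - PI < t <= 2 * PI * IZR q + PI -> sin t < 0 ->
  2 * PI * IZR q - PI < t < 2 * PI * IZR q.
Proof.
  intros ht hs.
  rewrite <- (sin_add_2PI_Z t (- q)), opp_IZR in hs.
  set (u := t + 2 * PI * - IZR q) in hs.
  destruct (Rle_or_lt 0 u) as [hu|hu].
  - destruct (Req_dec u 0) as [e|hu'].
    + rewrite e, sin_0 in hs; lra.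
    + destruct (Req_dec u PI) as [e|hu''].
      * rewrite e, sin_PI in hs; lra.
      * assert (0 < sin u) by (apply sin_gt_0; unfold u in *; lra). lra.
  - unfold u in *; lra.
Qed.

Lemma cos_eq_m1 t : cos t = -1 -> exists q : Z, t = PI + 2 * PI * IZR q.
Proof.
  intro hc. destruct (exists_2PI_Z_near t) as [q hq]. exists q.
  rewrite <- (cos_add_2PI_Z t (- q)), opp_IZR in hc.
  set (u := t + 2 * PI * - IZR q) in hc.
  destruct (Req_dec u PI) as [e|hu]; [unfold u in e; lra|].
  assert (hu2 : 0 < cos (u / 2)) by (apply cos_gt_0; unfold u in *; lra).
  replace u with (2 * (u / 2)) in hc by field. rewrite cos_2a_cos in hc. nra.
Qed.

Lemma cos_pos_strip t : 0 < cos t ->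
  exists q : Z, 2 * PI * IZR q - PI / 2 < t < 2 * PI * IZR q + PI / 2.
Proof.
  intro hc. destruct (exists_2PI_Z_near t) as [q hq]. exists q.
  rewrite <- (cos_add_2PI_Z t (- q)), opp_IZR in hc.
  set (u := t + 2 * PI * - IZR q) in hc.
  destruct (Rlt_or_le u (PI / 2)) as [hu|hu].
  - destruct (Rlt_or_le (- (PI / 2)) u) as [hu'|hu']; [unfold u in *; lra|].
    assert (cos u <= 0) by (rewrite <- cos_neg; apply cos_le_0; unfold u in *; lra). lra.
  - assert (cos u <= 0) by (apply cos_le_0; unfold u in *; lra). lra.
Qed.

(** * Continuity and intermediate values *)

Definition clamp (a b x : R) : R := Rmax a (Rmin b x).

Lemma clamp_in a b x : a <= b -> a <= clamp a b x <= b.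
Proof. intros; unfold clamp, Rmax, Rmin; repeat destruct Rle_dec; lra. Qed.

Lemma clamp_id a b x : a <= x <= b -> clamp a b x = x.
Proof. intros; unfold clamp, Rmax, Rmin; repeat destruct Rle_dec; lra. Qed.

Lemma clamp_1_lipschitz a b x y : a <= b -> Rabs (clamp a b y - clamp a b x) <= Rabs (y - x).
Proof.
  intros; unfold clamp, Rmax, Rmin; repeat destruct Rle_dec; unfold Rabs;
    repeat destruct Rcase_abs; lra.
Qed.

Lemma continuity_clamp_comp (f : R -> R) a b :
  a <= b ->
  (forall t, a <= t <= b ->
     filterlim f (within (fun u => a <= u <= b) (locally t)) (locally (f t))) ->
  continuity (fun x => f (clamp a b x)).
Proof.
  intros hab hf x. apply continuity_pt_filterlim.
  apply (filterlim_comp _ _ _ (clamp a b) f _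
           (within (fun u => a <= u <= b) (locally (clamp a b x)))).
  - intros P [eps He]. exists eps. intros u Hu. apply He; [|apply clamp_in; lra].
    eapply Rle_lt_trans; [apply clamp_1_lipschitz; lra|exact Hu].
  - apply hf, clamp_in, hab.
Qed.

Lemma same_side_of_avoided_value (f : R -> R) a b y :
  a <= b ->
  (forall t, a <= t <= b ->
     filterlim f (within (fun u => a <= u <= b) (locally t)) (locally (f t))) ->
  (forall t, a <= t <= b -> f t <> y) ->
  (f a < y <-> f b < y).
Proof.
  intros hab hf hy.
  assert (hya : f a <> y) by (apply hy; lra).
  assert (hyb : f b <> y) by (apply hy; lra).
  destruct (Rlt_dec (f a) y) as [ha|ha]; destruct (Rlt_dec (f b) y) as [hb|hb];
    try tauto; exfalso;
  destruct (IVT_gen _ a b y (continuity_clamp_comp f a b hab hf)) as [x [hx hfx]];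
    rewrite ?clamp_id by lra;
    try (unfold Rmin, Rmax; repeat destruct Rle_dec; lra);
  unfold Rmin, Rmax in hx; destruct Rle_dec; try lra;
  rewrite clamp_id in hfx by lra; apply (hy x); lra.
Qed.

Lemma strip_invariant_within (f : R -> R) a b lo hi :
  a <= b ->
  (forall t, a <= t <= b ->
     filterlim f (within (fun u => a <= u <= b) (locally t)) (locally (f t))) ->
  (forall t, a <= t <= b -> f t <> lo /\ f t <> hi) ->
  (lo < f a < hi <-> lo < f b < hi).
Proof.
  intros hab hf hav.
  assert (elo := same_side_of_avoided_value f a b lo hab hf (fun t ht => proj1 (hav t ht))).
  assert (ehi := same_side_of_avoided_value f a b hi hab hf (fun t ht => proj2 (hav t ht))).
  assert (hla := proj1 (hav a ltac:(lra))). assert (hlb := proj1 (hav b ltac:(lra))).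
  split; intros [h1 h2]; split; try tauto;
    [destruct (Rlt_dec (f b) lo) | destruct (Rlt_dec (f a) lo)]; try tauto; lra.
Qed.

Lemma strip_invariant_on_interval (f : R -> R) (I : R -> Prop) lo hi k0 k :
  (forall x y t, I x -> I y -> x <= t <= y -> I t) ->
  (forall t, I t -> continuous f t /\ f t <> lo /\ f t <> hi) ->
  I k0 -> I k -> lo < f k0 < hi -> lo < f k < hi.
Proof.
  intros hI hf h0 hk.
  assert (hwithin : forall x y, I x -> I y -> x <= y ->
    lo < f x < hi <-> lo < f y < hi).
  { intros x y hx hy hxy. apply strip_invariant_within; [exact hxy| |].
    - intros t ht. eapply filterlim_filter_le_1; [apply filter_le_within|].
      apply (hf t (hI x y t hx hy ht)).
    - intros t ht. apply (hf t (hI x y t hx hy ht)). }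
  destruct (Rle_dec k0 k) as [h|h].
  - apply (hwithin k0 k); auto.
  - apply (hwithin k k0); auto; lra.
Qed.

Lemma cos_pos_variation_lt_PI (h : R -> R) a b :
  a <= b ->
  (forall t, a <= t <= b ->
     filterlim h (within (fun u => a <= u <= b) (locally t)) (locally (h t))) ->
  (forall t, a <= t <= b -> 0 < cos (h t)) ->
  Rabs (h b - h a) < PI.
Proof.
  intros hab hc hpos.
  destruct (cos_pos_strip (h a)) as [q hq]; [apply hpos; lra|].
  assert (hb : 2 * PI * IZR q - PI / 2 < h b < 2 * PI * IZR q + PI / 2).
  { apply (strip_invariant_within h a b); auto.
    intros t ht. assert (hct := hpos t ht).
    split; intro e; rewrite e in hct.
    - replace (2 * PI * IZR q - PI / 2) with (- (PI / 2) + 2 * PI * IZR q) in hct by ring.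
      rewrite cos_add_2PI_Z, cos_neg, cos_PI2 in hct. lra.
    - replace (2 * PI * IZR q + PI / 2) with (PI / 2 + 2 * PI * IZR q) in hct by ring.
      rewrite cos_add_2PI_Z, cos_PI2 in hct. lra. }
  apply Rabs_def1; lra.
Qed.

(** * Arguments of planar points *)

Definition polar_arg (x y t : R) : Prop :=
  exists r, 0 < r /\ x = r * cos t /\ y = r * sin t.

Lemma is_arg_polar_arg z t : is_arg z t -> polar_arg (Re z) (Im z) t.
Proof. intros [hz [h1 h2]]. exists (Cmod z). split; auto. apply Cmod_gt_0, hz. Qed.

Lemma polar_arg_scale s x y t : 0 < s -> polar_arg x y t -> polar_arg (s * x) (s * y) t.
Proof.
  intros hs [r [hr [ex ey]]]. exists (s * r).
  split; [apply Rmult_lt_0_compat; auto|]. rewrite ex, ey. split; ring.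
Qed.

(* Half-angle formula for the argument in (al - PI, al + PI); it is continuous off the ray
   of direction al + PI. *)
Definition arg_branch (al x y : R) : R :=
  al + 2 * atan ((y * cos al - x * sin al) / (sqrt (x ^ 2 + y ^ 2) + x * cos al + y * sin al)).

Lemma sqrt_polar r t : 0 <= r -> sqrt ((r * cos t) ^ 2 + (r * sin t) ^ 2) = r.
Proof.
  intro hr. replace ((r * cos t) ^ 2 + (r * sin t) ^ 2) with (r ^ 2 * (sin t ^ 2 + cos t ^ 2)) by ring.
  rewrite <- !Rsqr_pow2, sin2_cos2, Rmult_1_r, Rsqr_pow2. apply sqrt_pow2, hr.
Qed.

Lemma arg_branch_polar al r t :
  0 < r -> al - PI < t < al + PI -> arg_branch al (r * cos t) (r * sin t) = t.
Proof.
  intros hr ht. unfold arg_branch. rewrite sqrt_polar by lra.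
  set (u := t - al).
  assert (e1 : r * sin t * cos al - r * cos t * sin al = r * sin u)
    by (unfold u; rewrite sin_minus; ring).
  assert (e2 : r + r * cos t * cos al + r * sin t * sin al = r * (1 + cos u))
    by (unfold u; rewrite cos_minus; ring).
  rewrite e1, e2.
  assert (hc : 0 < cos (u / 2)) by (apply cos_gt_0; unfold u; lra).
  replace u with (2 * (u / 2)) by field. rewrite sin_2a, cos_2a_cos.
  replace (r * (2 * sin (u / 2) * cos (u / 2)) / (r * (1 + (2 * cos (u / 2) * cos (u / 2) - 1))))
    with (tan (u / 2)) by (unfold tan; field; split; nra).
  rewrite atan_tan by (unfold u; lra). unfold u; field.
Qed.

Lemma continuity_pt_arg_branch (gx gy : R -> R) al x0 :
  continuity_pt gx x0 -> continuity_pt gy x0 ->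
  0 < sqrt (gx x0 ^ 2 + gy x0 ^ 2) + gx x0 * cos al + gy x0 * sin al ->
  continuity_pt (fun k => arg_branch al (gx k) (gy k)) x0.
Proof.
  intros hx hy hd. unfold arg_branch.
  assert (hsq : continuity_pt (fun k => sqrt (gx k ^ 2 + gy k ^ 2)) x0).
  { apply (continuity_pt_comp (fun k => gx k ^ 2 + gy k ^ 2) sqrt); [reg|].
    apply continuity_pt_sqrt. nra. }
  apply continuity_pt_plus; [apply continuity_pt_const; intros ? ?; auto|].
  apply continuity_pt_mult; [apply continuity_pt_const; intros ? ?; auto|].
  apply (continuity_pt_comp _ atan); [|apply derivable_continuous_pt, derivable_pt_atan].
  apply continuity_pt_div; [reg| |lra].
  apply continuity_pt_plus; [apply continuity_pt_plus|]; auto; reg.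
Qed.

Lemma cos_gt_m1 u : - PI < u < PI -> -1 < cos u.
Proof.
  intro h. replace u with (2 * (u / 2)) by field. rewrite cos_2a_cos.
  assert (0 < cos (u / 2)) by (apply cos_gt_0; lra). nra.
Qed.

Lemma polar_arg_limit (phi gx gy : R -> R) (D : R -> Prop) x0 al L :
  continuity_pt gx x0 -> continuity_pt gy x0 ->
  polar_arg (gx x0) (gy x0) L -> al - PI < L < al + PI ->
  within D (locally x0)
    (fun k => polar_arg (gx k) (gy k) (phi k) /\ al - PI < phi k < al + PI) ->
  filterlim phi (within D (locally x0)) (locally L).
Proof.
  intros hx hy [rho [hrho [ex ey]]] hL hev.
  replace L with (arg_branch al (gx x0) (gy x0)) by (rewrite ex, ey; apply arg_branch_polar; auto).
  apply (filterlim_ext_loc (fun k => arg_branch al (gx k) (gy k))).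
  - revert hev. apply filter_imp. intros k [[r [hr [e1 e2]]] hk].
    rewrite e1, e2. apply arg_branch_polar; auto.
  - eapply filterlim_filter_le_1; [apply filter_le_within|].
    apply (continuity_pt_filterlim (fun k => arg_branch al (gx k) (gy k))).
    apply continuity_pt_arg_branch; auto.
    rewrite ex, ey, sqrt_polar by lra.
    assert (hc := cos_gt_m1 (L - al) ltac:(lra)). rewrite cos_minus in hc. nra.
Qed.

(** * The function [a1] on the real axis and on the semicircle *)

Definition a1_coef (A B k : R) : R := A ^ 2 / (4 * (k ^ 2 - B ^ 2)).

Lemma a1_rect A B RR x y :
  let u := x ^ 2 - y ^ 2 - B ^ 2 in let v := 2 * x * y in
  u ^ 2 + v ^ 2 <> 0 ->
  a1 A B RR (x, y) =
  (1 + A ^ 2 * exp (- 4 * RR * y) * (u * cos (4 * RR * x) + v * sin (4 * RR * x))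
         / (4 * (u ^ 2 + v ^ 2)),
   A ^ 2 * exp (- 4 * RR * y) * (u * sin (4 * RR * x) - v * cos (4 * RR * x))
         / (4 * (u ^ 2 + v ^ 2))).
Proof.
  intros u v hN.
  unfold a1, cexp, Cdiv, Cplus, Cmult, Cinv, Cminus, Copp, RtoC, Re, Im, Ci; simpl.
  replace (4 * 0 - 0 * 1) with 0 by ring.
  replace (0 * (x * RR - y * 0) - (4 * 1 + 0 * 0) * (x * 0 + y * RR)) with (- 4 * RR * y) by ring.
  replace (0 * (x * 0 + y * RR) + (4 * 1 + 0 * 0) * (x * RR - y * 0)) with (4 * RR * x) by ring.
  unfold u, v in *. f_equal; field; (split; [lra|]); intro h; apply hN; nra.
Qed.

Lemma a1_real A B RR k : k ^ 2 <> B ^ 2 ->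
  a1 A B RR (RtoC k) = (1 + a1_coef A B k * cos (4 * k * RR), a1_coef A B k * sin (4 * k * RR)).
Proof.
  intro h. unfold RtoC. rewrite a1_rect by (intro e; apply h; nra).
  rewrite !Rmult_0_r, exp_0. unfold a1_coef.
  replace (4 * RR * k) with (4 * k * RR) by ring.
  f_equal; [f_equal|]; field; lra.
Qed.

Lemma semicircle_rect B eps t :
  semicircle B eps t = (- Rabs B - eps * cos t, eps * sin t).
Proof. unfold semicircle. rewrite cos_minus, sin_minus, cos_PI, sin_PI. f_equal; ring. Qed.

(* Up to the factor e^{i(t - theta)}, theta = 4|B|RR, a_1 - 1 on the semicircle is
   A^2 e^{-4 i RR eps e^{-it}} / (4 eps (2|B| + eps e^{-it})). *)
Lemma a1_semicircle_rotated A B RR eps t :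
  0 < eps < 2 * Rabs B ->
  let z := a1 A B RR (semicircle B eps t) in
  let th := 4 * Rabs B * RR in
  let be := 4 * RR * eps * cos t in
  Re z * cos (t - th) + Im z * sin (t - th) =
  cos (t - th) + A ^ 2 * exp (- 4 * RR * (eps * sin t)) * (2 * Rabs B * cos be + eps * cos (t - be))
                 / (4 * eps * (4 * Rabs B ^ 2 + 4 * Rabs B * eps * cos t + eps ^ 2)).
Proof.
  intros heps z th be.
  set (b := Rabs B) in *. set (ct := cos t). set (st := sin t).
  assert (hcs : ct ^ 2 + st ^ 2 = 1)
    by (unfold ct, st; rewrite <- !Rsqr_pow2, Rplus_comm; apply sin2_cos2).
  assert (hct := COS_bound t). fold ct in hct.
  set (M := 4 * b ^ 2 + 4 * b * eps * ct + eps ^ 2).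
  assert (hM : 0 < M).
  { assert (0 < (2 * b - eps) ^ 2) by (apply pow_lt; lra).
    assert (0 <= b * eps * (1 + ct)) by (apply Rmult_le_pos; nra).
    unfold M; nra. }
  set (x := - b - eps * ct). set (y := eps * st).
  set (u := x ^ 2 - y ^ 2 - B ^ 2). set (v := 2 * x * y).
  assert (hB2 : B ^ 2 = b ^ 2) by (symmetry; apply pow2_abs).
  assert (hN : u ^ 2 + v ^ 2 = eps ^ 2 * M).
  { transitivity (eps ^ 2 * (ct ^ 2 + st ^ 2) * (4 * b ^ 2 + 4 * b * eps * ct + eps ^ 2 * (ct ^ 2 + st ^ 2))).
    - unfold u, v, x, y; rewrite hB2; ring.
    - rewrite hcs; unfold M; ring. }
  unfold z. rewrite semicircle_rect. fold b ct st x y.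
  rewrite a1_rect; fold u v;
    [|rewrite hN; apply Rgt_not_eq, Rmult_lt_0_compat; [apply pow_lt|]; lra].
  unfold Re, Im; cbn [fst snd]. rewrite hN.
  set (E := exp (- 4 * RR * y)).
  assert (hrot : (u * cos (4 * RR * x) + v * sin (4 * RR * x)) * cos (t - th)
                 + (u * sin (4 * RR * x) - v * cos (4 * RR * x)) * sin (t - th)
                 = eps * (2 * b * cos be + eps * cos (t - be))).
  { transitivity (u * cos (4 * RR * x - (t - th)) + v * sin (4 * RR * x - (t - th))).
    { rewrite (cos_minus (4 * RR * x)), (sin_minus (4 * RR * x)). ring. }
    replace (4 * RR * x - (t - th)) with (- (t + be)) by (unfold x, th, be, ct; ring).
    rewrite cos_neg, sin_neg, cos_plus, sin_plus, cos_minus. fold ct st.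
    unfold u, v, x, y. rewrite hB2.
    transitivity (eps * (ct ^ 2 + st ^ 2) * (2 * b * cos be + eps * (ct * cos be + st * sin be))).
    - ring.
    - rewrite hcs. ring. }
  transitivity (cos (t - th) + A ^ 2 * E
     * ((u * cos (4 * RR * x) + v * sin (4 * RR * x)) * cos (t - th)
        + (u * sin (4 * RR * x) - v * cos (4 * RR * x)) * sin (t - th)) / (4 * (eps ^ 2 * M))).
  - field. split; lra.
  - rewrite hrot. field. split; lra.
Qed.

Lemma cos_ge_7_8 x : Rabs x <= 1 / 2 -> 7 / 8 <= cos x.
Proof.
  intro h. apply Rabs_le_between in h. assert (hp := PI2_1).
  destruct (cos_bound x 0) as [h1 _]; [lra|lra|].
  unfold cos_approx, cos_term in h1. simpl in h1. nra.
Qed.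

Lemma a1_semicircle_rotated_pos A B RR eps t :
  0 < A -> 0 < RR -> 0 < eps <= Rabs B / 2 -> 4 * RR * eps <= 1 / 2 ->
  40 * Rabs B * eps < A ^ 2 ->
  let z := a1 A B RR (semicircle B eps t) in
  let th := 4 * Rabs B * RR in
  0 < Re z * cos (t - th) + Im z * sin (t - th).
Proof.
  intros hA hR heps hRe hAe z th.
  unfold z, th. rewrite a1_semicircle_rotated by lra.
  set (b := Rabs B) in *. set (be := 4 * RR * eps * cos t).
  assert (hct := COS_bound t). assert (hst := SIN_bound t).
  assert (hbe : 7 / 8 <= cos be).
  { apply cos_ge_7_8. unfold be.
    rewrite Rabs_mult, (Rabs_pos_eq (4 * RR * eps)) by nra.
    assert (Rabs (cos t) <= 1) by (apply Rabs_le; lra).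
    assert (0 <= Rabs (cos t)) by apply Rabs_pos. nra. }
  assert (hE : 1 / 2 <= exp (- 4 * RR * (eps * sin t))).
  { assert (h := exp_ineq1_le (- 4 * RR * (eps * sin t))).
    assert (RR * eps * sin t <= RR * eps) by (assert (0 <= RR * eps) by nra; nra). nra. }
  assert (hnum : 5 * b / 4 <= 2 * b * cos be + eps * cos (t - be))
    by (assert (hc := COS_bound (t - be)); nra).
  set (M := 4 * b ^ 2 + 4 * b * eps * cos t + eps ^ 2).
  assert (hM : 0 < M <= 25 * b ^ 2 / 4).
  { assert (0 <= b * eps * (1 - cos t)) by (apply Rmult_le_pos; nra).
    assert (0 <= b * eps * (1 + cos t)) by (apply Rmult_le_pos; nra).
    unfold M; split; nra. }
  assert (hfrac : 1 < A ^ 2 * exp (- 4 * RR * (eps * sin t)) * (2 * b * cos be + eps * cos (t - be))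
                      / (4 * eps * M)).
  { apply Rlt_div_r; [nra|].
    assert (hA2 : 0 < A ^ 2) by (apply pow_lt; lra).
    assert (hb : 0 < b) by lra.
    assert (h1 : 4 * eps * M <= 25 * eps * b ^ 2) by nra.
    assert (h2 : 5 * b / 8 <= exp (- 4 * RR * (eps * sin t)) * (2 * b * cos be + eps * cos (t - be)))
      by nra.
    assert (h3 : 25 * eps * b ^ 2 < A ^ 2 * (5 * b / 8)) by nra.
    nra. }
  assert (hc := COS_bound (t - 4 * b * RR)). lra.
Qed.

Lemma semicircle_arg_increment A B RR eps (psi : R -> R) :
  0 < A -> 0 < RR -> 0 < eps <= Rabs B / 2 -> 4 * RR * eps <= 1 / 2 ->
  40 * Rabs B * eps < A ^ 2 ->
  (forall t, 0 <= t <= PI ->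
     is_arg (a1 A B RR (semicircle B eps t)) (psi t) /\
     filterlim psi (within (fun u => 0 <= u <= PI) (locally t)) (locally (psi t))) ->
  psi 0 < psi PI < psi 0 + 2 * PI.
Proof.
  intros hA hR heps hRe hAe hpsi.
  assert (hp := PI_RGT_0).
  set (th := 4 * Rabs B * RR).
  set (h := fun s => psi s - (s - th)).
  assert (hcos : forall t, 0 <= t <= PI -> 0 < cos (h t)).
  { intros t ht. destruct (hpsi t ht) as [harg _].
    destruct (is_arg_polar_arg _ _ harg) as [r [hr [e1 e2]]].
    assert (hpos := a1_semicircle_rotated_pos A B RR eps t hA hR heps hRe hAe).
    cbv zeta in hpos. fold th in hpos. rewrite e1, e2 in hpos.
    unfold h. rewrite cos_minus. nra. }
  assert (hcont : forall t, 0 <= t <= PI ->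
    filterlim h (within (fun u => 0 <= u <= PI) (locally t)) (locally (h t))).
  { intros t ht. apply (filterlim_comp_2 (G := locally (psi t)) (H := locally (- (t - th)))
                   psi (fun s => - (s - th)) Rplus).
    - apply hpsi, ht.
    - eapply filterlim_filter_le_1; [apply filter_le_within|].
      apply (continuity_pt_filterlim (fun s => - (s - th))). reg.
    - exact (filterlim_plus (psi t) (- (t - th))). }
  assert (hvar := cos_pos_variation_lt_PI h 0 PI ltac:(lra) hcont hcos).
  unfold h in hvar. apply Rabs_def2 in hvar. lra.
Qed.

(** * Nodes *)

Lemma sqr_sub_pos_left B k : k < - Rabs B -> 0 < k ^ 2 - B ^ 2.
Proof.
  intro hk. assert (0 <= Rabs B) by apply Rabs_pos. rewrite <- (pow2_abs B).
  replace (k ^ 2 - Rabs B ^ 2) with ((- k - Rabs B) * (- k + Rabs B)) by ring.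
  apply Rmult_lt_0_compat; lra.
Qed.

Lemma sqr_sub_neg_right B k : - Rabs B < k < 0 -> k ^ 2 - B ^ 2 < 0.
Proof.
  intro hk. rewrite <- (pow2_abs B).
  replace (k ^ 2 - Rabs B ^ 2) with (- ((k + Rabs B) * (Rabs B - k))) by ring.
  assert (0 < (k + Rabs B) * (Rabs B - k)) by (apply Rmult_lt_0_compat; lra). lra.
Qed.

Definition node (B RR : R) (m : nat) : R :=
  match m with O => - Rabs B | S _ => - (2 * INR m - 1) * PI / (4 * RR) end.

Lemma omega_node B RR n m : (m <= n)%nat -> omega B RR n m = Finite (node B RR m).
Proof.
  intro h. unfold omega. destruct m as [|m]; [reflexivity|].
  replace (Nat.ltb n (S m)) with false by (symmetry; apply Nat.ltb_ge; lia). reflexivity.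
Qed.

Lemma Rcrit_pos A B : 0 < A -> 0 < Rcrit A B.
Proof.
  intro hA. unfold Rcrit. assert (0 < A ^ 2) by (apply pow_lt, hA).
  assert (0 <= B ^ 2) by apply pow2_ge_0.
  assert (0 < sqrt (4 * B ^ 2 + A ^ 2)) by (apply sqrt_lt_R0; lra). lra.
Qed.

Section Nodes.

Variables (B RR : R).
Hypothesis hR : 0 < RR.
Hypothesis hB : 4 * Rabs B * RR < PI.

Lemma node_lt_neg_Rabs m : (1 <= m)%nat -> node B RR m < - Rabs B.
Proof.
  intro hm. destruct m as [|m]; [lia|]. unfold node.
  assert (hp := PI_RGT_0). assert (1 <= INR (S m)) by (apply (le_INR 1); lia).
  apply Rlt_div_l; nra.
Qed.

Lemma node_antitone m m' : (m <= m')%nat -> node B RR m' <= node B RR m.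
Proof.
  intro hm. destruct m' as [|m']; [replace m with 0%nat by lia; lra|].
  destruct m as [|m]; [left; apply node_lt_neg_Rabs; lia|].
  unfold node. apply le_INR in hm. assert (hp := PI_RGT_0).
  unfold Rdiv. apply Rmult_le_compat_r; [left; apply Rinv_0_lt_compat; lra|]. nra.
Qed.

Lemma node_succ_gap m : node B RR (S m) + (PI / (4 * RR) - Rabs B) <= node B RR m.
Proof.
  assert (hp := PI_RGT_0). destruct m as [|m].
  - unfold node. simpl INR. right. field. lra.
  - assert (e : node B RR (S (S m)) = node B RR (S m) - 2 * (PI / (4 * RR)))
      by (unfold node; rewrite (S_INR (S m)); field; lra).
    assert (0 < PI / (4 * RR)) by (apply Rdiv_lt_0_compat; lra).
    assert (0 <= Rabs B) by apply Rabs_pos.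
    rewrite e. lra.
Qed.

Lemma sin_cos_near_node m x : (1 <= m)%nat ->
  sin (4 * (node B RR m + x) * RR) = - sin (4 * x * RR) /\
  cos (4 * (node B RR m + x) * RR) = - cos (4 * x * RR).
Proof.
  intro hm. destruct m as [|m]; [lia|].
  assert (e : 4 * (node B RR (S m) + x) * RR + 2 * INR (S m) * PI = 4 * x * RR + PI)
    by (unfold node; field; lra).
  rewrite <- (sin_period _ (S m)), <- (cos_period _ (S m)), e, neg_sin, neg_cos. auto.
Qed.

Lemma a1_coef_node_gt_1_iff A m : 0 < A -> (1 <= m)%nat ->
  1 < a1_coef A B (node B RR m) <-> (2 * INR m - 1) * PI / Rcrit A B < RR.
Proof.
  intros hA hm.
  assert (hw := node_lt_neg_Rabs m hm). set (w := node B RR m) in *.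
  assert (hpos := sqr_sub_pos_left B w hw).
  set (S := sqrt (4 * B ^ 2 + A ^ 2)).
  assert (hS2 : S ^ 2 = 4 * B ^ 2 + A ^ 2)
    by (apply pow2_sqrt; nra).
  assert (hS : 0 < S) by (apply sqrt_lt_R0; nra).
  assert (hw4 : - w * (4 * RR) = (2 * INR m - 1) * PI)
    by (unfold w, node; destruct m; [lia|]; field; lra).
  unfold a1_coef, Rcrit. fold S. rewrite <- Rlt_div_r, Rmult_1_l, Rlt_div_l by lra.
  assert (hw0 : 0 < - w) by (assert (0 <= Rabs B) by apply Rabs_pos; lra).
  split; intro h.
  - assert (hsq : (- 2 * w) ^ 2 < S ^ 2) by nra.
    assert (- 2 * w < S) by (destruct (Rlt_or_le (- 2 * w) S); [auto|nra]).
    nra.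
  - assert (- 2 * w < S) by nra. nra.
Qed.

Lemma a1_neg_real_at_node A k :
  k < - Rabs B ->
  a1_coef A B k * sin (4 * k * RR) = 0 -> 1 + a1_coef A B k * cos (4 * k * RR) < 0 ->
  exists m, (1 <= m)%nat /\ k = node B RR m /\ 1 < a1_coef A B k.
Proof.
  intros hk hs hc.
  assert (hp := PI_RGT_0). assert (0 <= Rabs B) by apply Rabs_pos.
  assert (hcoef : 0 <= a1_coef A B k).
  { unfold a1_coef. apply Rle_mult_inv_pos; [apply pow2_ge_0|].
    assert (hpos := sqr_sub_pos_left B k hk). lra. }
  assert (hcos : cos (4 * k * RR) = -1).
  { assert (hsin : sin (4 * k * RR) = 0)
      by (apply Rmult_integral in hs; destruct hs as [h|h]; [rewrite h in hc; lra|exact h]).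
    assert (h1 := sin2_cos2 (4 * k * RR)). rewrite hsin in h1. unfold Rsqr in h1.
    assert (cos (4 * k * RR) < 0) by nra. nra. }
  destruct (cos_eq_m1 _ hcos) as [q hq].
  assert (hq1 : (q <= -1)%Z).
  { assert (4 * k * RR < 0) by nra.
    assert (h0 : IZR q < IZR 0) by nra. apply lt_IZR in h0. lia. }
  exists (Z.to_nat (- q)).
  assert (hm : INR (Z.to_nat (- q)) = - IZR q)
    by (rewrite INR_IZR_INZ, Z2Nat.id, opp_IZR by lia; reflexivity).
  split; [lia|]. split.
  - destruct (Z.to_nat (- q)) as [|m] eqn:hm0; [lia|]. unfold node. rewrite hm.
    apply (Rmult_eq_reg_r (4 * RR)); [|lra].
    replace (k * (4 * RR)) with (4 * k * RR) by ring. rewrite hq. field. lra.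
  - rewrite hcos in hc. lra.
Qed.

End Nodes.

(** * The branch [phi] *)

Lemma at_right_0_between c : 0 < c -> at_right 0 (fun e => 0 < e < c).
Proof.
  intro hc. exists (mkposreal c hc). intros e he hpos. split; [exact hpos|].
  change (Rabs (e - 0) < c) in he. apply Rabs_def2 in he. lra.
Qed.

Section Branch.

Variables (A B RR : R) (phi : R -> R).
Hypothesis hA : 0 < A.
Hypothesis hR : 0 < RR.
Hypothesis hB : 0 < 4 * Rabs B * RR < PI.
Hypothesis hphi : is_phi A B RR phi.

Lemma Rabs_B_pos : 0 < Rabs B.
Proof. destruct (Rle_lt_dec (Rabs B) 0); [nra|auto]. Qed.

Lemma phi_real_point k : k < 0 -> k <> - Rabs B ->
  is_arg (a1 A B RR (RtoC k)) (phi k) /\ continuous phi k.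
Proof.
  intros hk hkB. destruct hphi as [hL [hRt _]].
  destruct (Rlt_or_le k (- Rabs B)) as [h|h]; [apply hL, h|apply hRt; lra].
Qed.

Lemma phi_polar k : k < 0 -> k <> - Rabs B ->
  polar_arg (1 + a1_coef A B k * cos (4 * k * RR)) (a1_coef A B k * sin (4 * k * RR)) (phi k).
Proof.
  intros hk hkB.
  assert (hk2 : k ^ 2 <> B ^ 2).
  { intro e. assert (0 <= Rabs B) by apply Rabs_pos.
    rewrite <- (pow2_abs B) in e. apply hkB. nra. }
  assert (h := is_arg_polar_arg _ _ (proj1 (phi_real_point k hk hkB))).
  rewrite a1_real in h by exact hk2. exact h.
Qed.

Lemma sin_phi_left k : k < - Rabs B ->
  exists s, 0 < s /\ sin (phi k) = s * sin (4 * k * RR).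
Proof.
  intro hk. assert (hb := Rabs_B_pos).
  destruct (phi_polar k ltac:(lra) ltac:(lra)) as [r [hr [_ e]]].
  exists (a1_coef A B k / r). split.
  - apply Rdiv_lt_0_compat; [|exact hr].
    apply Rdiv_lt_0_compat; [apply pow_lt, hA|]. assert (h := sqr_sub_pos_left B k hk). lra.
  - apply (Rmult_eq_reg_l r); [|lra]. rewrite <- e. field. lra.
Qed.

Lemma sin_phi_right_pos k : - Rabs B < k < 0 -> 0 < sin (phi k).
Proof.
  intro hk. destruct (phi_polar k ltac:(lra) ltac:(lra)) as [r [hr [_ e]]].
  assert (hc : a1_coef A B k < 0).
  { apply Rdiv_pos_neg; [apply pow_lt, hA|]. assert (h := sqr_sub_neg_right B k hk). lra. }
  assert (hs : sin (4 * k * RR) < 0) by (apply sin_lt_0_var; nra).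
  nra.
Qed.

(* Dividing [a1 k] by [a1_coef A B k] removes the pole at [-|B|]. *)
Lemma phi_polar_left k : k < - Rabs B ->
  polar_arg (4 * (k ^ 2 - B ^ 2) / A ^ 2 + cos (4 * k * RR)) (sin (4 * k * RR)) (phi k).
Proof.
  intro hk. assert (hb := Rabs_B_pos).
  assert (hk2 := sqr_sub_pos_left B k hk). assert (hA2 : 0 < A ^ 2) by (apply pow_lt, hA).
  assert (h := polar_arg_scale (4 * (k ^ 2 - B ^ 2) / A ^ 2) _ _ _
                 ltac:(apply Rdiv_lt_0_compat; lra) (phi_polar k ltac:(lra) ltac:(lra))).
  unfold a1_coef in h. replace (4 * (k ^ 2 - B ^ 2) / A ^ 2 + cos (4 * k * RR)) with
    (4 * (k ^ 2 - B ^ 2) / A ^ 2 * (1 + A ^ 2 / (4 * (k ^ 2 - B ^ 2)) * cos (4 * k * RR)))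
    by (field; lra).
  replace (sin (4 * k * RR)) with
    (4 * (k ^ 2 - B ^ 2) / A ^ 2 * (A ^ 2 / (4 * (k ^ 2 - B ^ 2)) * sin (4 * k * RR)))
    by (field; lra).
  exact h.
Qed.

Lemma phi_polar_right k : - Rabs B < k < 0 ->
  polar_arg (4 * (B ^ 2 - k ^ 2) / A ^ 2 - cos (4 * k * RR)) (- sin (4 * k * RR)) (phi k).
Proof.
  intro hk.
  assert (hk2 := sqr_sub_neg_right B k hk). assert (hA2 : 0 < A ^ 2) by (apply pow_lt, hA).
  assert (h := polar_arg_scale (4 * (B ^ 2 - k ^ 2) / A ^ 2) _ _ _
                 ltac:(apply Rdiv_lt_0_compat; lra) (phi_polar k ltac:(lra) ltac:(lra))).
  unfold a1_coef in h. replace (4 * (B ^ 2 - k ^ 2) / A ^ 2 - cos (4 * k * RR)) with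
    (4 * (B ^ 2 - k ^ 2) / A ^ 2 * (1 + A ^ 2 / (4 * (k ^ 2 - B ^ 2)) * cos (4 * k * RR)))
    by (field; lra).
  replace (- sin (4 * k * RR)) with
    (4 * (B ^ 2 - k ^ 2) / A ^ 2 * (A ^ 2 / (4 * (k ^ 2 - B ^ 2)) * sin (4 * k * RR)))
    by (field; lra).
  exact h.
Qed.

Section Regime.

Variable n : nat.
Hypothesis hn : (2 * INR n - 1) * PI / Rcrit A B < RR < (2 * INR n + 1) * PI / Rcrit A B.

(* [in_gap j] is the paper's interval [(ω_{n-j+1}, ω_{n-j})], with [ω_{n+1} = -oo]. *)
Definition in_gap (j : nat) (k : R) : Prop :=
  ((j = 0)%nat \/ node B RR (n - j + 1) < k) /\ k < node B RR (n - j).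

Definition strip_on_gap (j : nat) : Prop :=
  forall k, in_gap j k -> 2 * PI * INR j - PI < phi k < 2 * PI * INR j + PI.

Lemma in_gap_convex j x y t : in_gap j x -> in_gap j y -> x <= t <= y -> in_gap j t.
Proof.
  unfold in_gap. intros [[hx|hx] hx'] [_ hy] ht.
  - split; [left|]; auto; lra.
  - split; [right|]; lra.
Qed.

Lemma in_gap_off_nodes j k : (j <= n)%nat -> in_gap j k ->
  k < - Rabs B /\ forall m, (1 <= m <= n)%nat -> k <> node B RR m.
Proof.
  intros hj [hlo hhi].
  assert (hmono := node_antitone B RR hR (proj2 hB)).
  split.
  - assert (node B RR (n - j) <= node B RR 0) by (apply hmono; lia). simpl in *. lra.
  - intros m hm e. subst k. destruct (le_lt_dec m (n - j)) as [h|h].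
    + assert (node B RR (n - j) <= node B RR m) by (apply hmono, h). lra.
    + destruct hlo as [hlo|hlo]; [lia|].
      assert (node B RR m <= node B RR (n - j + 1)) by (apply hmono; lia). lra.
Qed.

Lemma phi_ne_odd_PI j k q : (j <= n)%nat -> in_gap j k -> phi k <> PI + 2 * PI * IZR q.
Proof.
  intros hj hk e.
  destruct (in_gap_off_nodes j k hj hk) as [hkB hnode].
  destruct (phi_polar k ltac:(assert (h := Rabs_B_pos); lra) ltac:(lra)) as [r [hr [ec es]]].
  rewrite e, cos_add_2PI_Z, cos_PI in ec. rewrite e, sin_add_2PI_Z, sin_PI in es.
  destruct (a1_neg_real_at_node B RR hR A k hkB ltac:(lra) ltac:(lra)) as [m [hm [ek hc]]].
  subst k. apply (hnode m); [split; [exact hm|]|reflexivity].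
  apply (a1_coef_node_gt_1_iff B RR hR (proj2 hB) A m hA hm) in hc.
  assert (hlt : (2 * INR m - 1) * (PI / Rcrit A B) < (2 * INR n + 1) * (PI / Rcrit A B))
    by (unfold Rdiv in *; rewrite <- !Rmult_assoc; lra).
  apply Rmult_lt_reg_r in hlt; [|apply Rdiv_lt_0_compat; [apply PI_RGT_0|apply Rcrit_pos, hA]].
  assert (hmn : INR m < INR (S n)) by (rewrite S_INR; lra).
  apply INR_lt in hmn. lia.
Qed.

Lemma strip_of_point j k0 : (j <= n)%nat -> in_gap j k0 ->
  2 * PI * INR j - PI < phi k0 < 2 * PI * INR j + PI -> strip_on_gap j.
Proof.
  intros hj hk0 h0 k hk. assert (hb := Rabs_B_pos).
  apply (strip_invariant_on_interval phi (in_gap j) _ _ k0 k); auto.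
  - intros x y t hx hy ht. apply (in_gap_convex j x y t hx hy ht).
  - intros t ht. destruct (in_gap_off_nodes j t hj ht) as [htB _].
    split; [apply (phi_real_point t); lra|].
    rewrite INR_IZR_INZ. split.
    + replace (2 * PI * IZR (Z.of_nat j) - PI) with (PI + 2 * PI * IZR (Z.of_nat j - 1))
        by (rewrite minus_IZR; ring).
      apply (phi_ne_odd_PI j); auto.
    + rewrite Rplus_comm. apply (phi_ne_odd_PI j); auto.
Qed.

Lemma strip_on_gap_0 : strip_on_gap 0.
Proof.
  destruct hphi as [_ [_ [hlim _]]].
  destruct (hlim (fun v => Rabs (v - 0) < PI)) as [M hM].
  { exists (mkposreal PI PI_RGT_0). intros v hv. apply hv. }
  set (k0 := Rmin M (node B RR n) - 1).
  assert (hk0M : k0 < M) by (unfold k0; assert (h := Rmin_l M (node B RR n)); lra).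
  assert (hk0n : k0 < node B RR n) by (unfold k0; assert (h := Rmin_r M (node B RR n)); lra).
  apply (strip_of_point 0 k0); [lia| |].
  - split; [left; reflexivity|]. rewrite Nat.sub_0_r. exact hk0n.
  - assert (h := hM k0 hk0M). rewrite Rminus_0_r in h. apply Rabs_def2 in h.
    simpl INR. lra.
Qed.

Lemma node_neighbourhood m : (1 <= m <= n)%nat ->
  exists d, 0 < d < PI / (4 * RR) - Rabs B /\
    Rabs (phi (node B RR m + - d) - phi (node B RR m)) < PI / 2 /\
    Rabs (phi (node B RR m + d) - phi (node B RR m)) < PI / 2.
Proof.
  intro hm. assert (hb := Rabs_B_pos).
  assert (hw := node_lt_neg_Rabs B RR hR (proj2 hB) m (proj1 hm)).
  set (w := node B RR m) in *.
  destruct (proj2 (phi_real_point w ltac:(lra) ltac:(lra)) (fun v => Rabs (v - phi w) < PI / 2))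
    as [delta hdelta].
  { exists (mkposreal (PI / 2) ltac:(lra)). intros v hv. apply hv. }
  set (D := PI / (4 * RR) - Rabs B).
  assert (hD : 0 < D).
  { unfold D. apply Rlt_0_minus, Rlt_div_r; lra. }
  set (d := Rmin delta D / 2).
  assert (hd : 0 < d /\ d < delta /\ d < D).
  { assert (h1 := Rmin_l delta D). assert (h2 := Rmin_r delta D).
    assert (0 < Rmin delta D) by (apply Rmin_glb_lt; [apply cond_pos|exact hD]).
    unfold d; lra. }
  exists d. split; [lra|]. split; apply hdelta.
  - change (Rabs (w + - d - w) < delta).
    replace (w + - d - w) with (- d) by ring. rewrite Rabs_Ropp, Rabs_pos_eq; lra.
  - change (Rabs (w + d - w) < delta).
    replace (w + d - w) with d by ring. rewrite Rabs_pos_eq; lra.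
Qed.

Lemma phi_node_odd m : (1 <= m <= n)%nat -> exists q, phi (node B RR m) = PI + 2 * PI * IZR q.
Proof.
  intro hm. assert (hb := Rabs_B_pos).
  assert (hw := node_lt_neg_Rabs B RR hR (proj2 hB) m (proj1 hm)).
  assert (hc : 1 < a1_coef A B (node B RR m)).
  { apply (a1_coef_node_gt_1_iff B RR hR (proj2 hB) A m hA (proj1 hm)).
    assert (INR m <= INR n) by (apply le_INR; lia).
    assert ((2 * INR m - 1) * PI / Rcrit A B <= (2 * INR n - 1) * PI / Rcrit A B).
    { unfold Rdiv. apply Rmult_le_compat_r; [left; apply Rinv_0_lt_compat, Rcrit_pos, hA|].
      apply Rmult_le_compat_r; [left; apply PI_RGT_0|lra]. }
    lra. }
  destruct (phi_polar (node B RR m) ltac:(lra) ltac:(lra)) as [r [hr [ec es]]].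
  destruct (sin_cos_near_node B RR hR m 0 (proj1 hm)) as [hs hcos].
  rewrite Rplus_0_r, Rmult_0_r, Rmult_0_l in hs, hcos. rewrite sin_0 in hs. rewrite cos_0 in hcos.
  rewrite hs in es. rewrite hcos in ec.
  apply cos_eq_m1.
  assert (hsin : sin (phi (node B RR m)) = 0) by nra.
  assert (hsq := sin2_cos2 (phi (node B RR m))). rewrite hsin in hsq. unfold Rsqr in hsq.
  assert (cos (phi (node B RR m)) < 0) by nra. nra.
Qed.

Lemma sin_phi_near_node m x : (1 <= m)%nat -> node B RR m + x < - Rabs B ->
  exists s, 0 < s /\ sin (phi (node B RR m + x)) = - s * sin (4 * x * RR).
Proof.
  intros hm hx. destruct (sin_phi_left _ hx) as [s [hs e]].
  exists s. split; [exact hs|].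
  rewrite e, (proj1 (sin_cos_near_node B RR hR m x hm)). ring.
Qed.

Lemma sin_node_offset_pos d : 0 < d < PI / (4 * RR) - Rabs B -> 0 < sin (4 * d * RR).
Proof.
  intro hd. assert (hb := Rabs_B_pos).
  assert (d * (4 * RR) < PI) by (apply Rlt_div_r; lra).
  apply sin_gt_0; nra.
Qed.

Lemma phi_node_value j : (j < n)%nat -> strip_on_gap j ->
  phi (node B RR (n - j)) = (2 * INR j + 1) * PI.
Proof.
  intros hj hstrip.
  set (m := (n - j)%nat). assert (hm : (1 <= m <= n)%nat) by (unfold m; lia).
  destruct (node_neighbourhood m hm) as [d [hd [hleft _]]].
  destruct (phi_node_odd m hm) as [q hq].
  set (w := node B RR m) in *. set (kL := w + - d).
  assert (hkL : in_gap j kL).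
  { unfold in_gap. fold m w. split; [right|unfold kL; lra].
    rewrite Nat.add_1_r.
    assert (h := node_succ_gap B RR hR m). fold w in h. unfold kL; lra. }
  assert (hkLB : kL < - Rabs B) by apply (in_gap_off_nodes j kL ltac:(lia) hkL).
  assert (hsin : 0 < sin (phi kL)).
  { destruct (sin_phi_near_node m (- d) (proj1 hm) hkLB) as [s [hs e]]. fold w kL in e.
    replace (4 * - d * RR) with (- (4 * d * RR)) in e by ring. rewrite sin_neg in e.
    assert (h := sin_node_offset_pos d hd). nra. }
  assert (hL := hstrip kL hkL). rewrite INR_IZR_INZ in hL |- *.
  destruct (sin_pos_strip (phi kL) (Z.of_nat j)) as [hL1 hL2]; [lra|exact hsin|].
  apply Rabs_def2 in hleft. fold w kL in hleft.
  replace q with (Z.of_nat j) in hq.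
  - rewrite hq. ring.
  - apply Z_eq_of_Rabs_lt_1, Rabs_def1; nra.
Qed.

Lemma strip_after_node j : (j < n)%nat ->
  phi (node B RR (n - j)) = (2 * INR j + 1) * PI -> strip_on_gap (S j).
Proof.
  intros hj hval.
  set (m := (n - j)%nat) in *. assert (hm : (1 <= m <= n)%nat) by (unfold m; lia).
  destruct (node_neighbourhood m hm) as [d [hd [_ hright]]].
  set (w := node B RR m) in *. set (kR := w + d).
  assert (hkR : in_gap (S j) kR).
  { unfold in_gap. replace (n - S j + 1)%nat with m by (unfold m; lia). fold w.
    split; [right; unfold kR; lra|].
    assert (h := node_succ_gap B RR hR (n - S j)).
    replace (S (n - S j)) with m in h by (unfold m; lia). fold w in h. unfold kR; lra. }
  assert (hkRB : kR < - Rabs B) by apply (in_gap_off_nodes (S j) kR hj hkR).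
  assert (hsin : sin (phi kR) < 0).
  { destruct (sin_phi_near_node m d (proj1 hm) hkRB) as [s [hs e]]. fold w kR in e.
    assert (h := sin_node_offset_pos d hd). nra. }
  apply Rabs_def2 in hright. fold w kR in hright. rewrite hval in hright.
  assert (hgt : 2 * PI * INR j + PI < phi kR).
  { destruct (Rlt_or_le (2 * PI * INR j + PI) (phi kR)) as [h|h]; [exact h|].
    rewrite INR_IZR_INZ in h, hright.
    destruct (sin_neg_strip (phi kR) (Z.of_nat j)); [lra|exact hsin|lra]. }
  apply (strip_of_point (S j) kR hj hkR). rewrite S_INR. lra.
Qed.

Lemma strip_on_gap_all j : (j <= n)%nat -> strip_on_gap j.
Proof.
  induction j as [|j IH]; intro hj.
  - exact strip_on_gap_0.
  - apply strip_after_node; [lia|]. apply phi_node_value; [lia|]. apply IH. lia.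
Qed.

Lemma phi_lim_left_B :
  filterlim phi (at_left (- Rabs B)) (locally (2 * PI * INR n - 4 * Rabs B * RR)).
Proof.
  assert (hnode1 := node_lt_neg_Rabs B RR hR (proj2 hB) 1 (le_n 1)).
  apply (polar_arg_limit phi (fun k => 4 * (k ^ 2 - B ^ 2) / A ^ 2 + cos (4 * k * RR))
           (fun k => sin (4 * k * RR)) _ _ (2 * PI * INR n)); [reg|reg| |lra|].
  - exists 1. split; [lra|]. rewrite <- (pow2_abs B).
    replace (2 * PI * INR n - 4 * Rabs B * RR) with (4 * - Rabs B * RR + 2 * INR n * PI) by ring.
    rewrite cos_period, sin_period. split; [field; lra|ring].
  - exists (mkposreal (- Rabs B - node B RR 1) ltac:(lra)).
    intros k hk hkB. change (Rabs (k - - Rabs B) < - Rabs B - node B RR 1) in hk.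
    apply Rabs_def2 in hk. split; [apply phi_polar_left, hkB|].
    apply (strip_on_gap_all n (le_n n)).
    unfold in_gap. rewrite Nat.sub_diag. split; [right|exact hkB]. change (node B RR 1 < k). lra.
Qed.

Lemma phi_across_B : exists eps, 0 < eps < Rabs B /\
  2 * PI * INR n - PI < phi (- Rabs B + eps) < 2 * PI * INR n + 2 * PI.
Proof.
  assert (hA2 : 0 < A ^ 2) by (apply pow_lt, hA).
  set (th := 4 * Rabs B * RR) in *.
  set (de := Rmin th (PI - th) / 2).
  assert (hde : 0 < de /\ de < th /\ de < PI - th).
  { assert (h1 := Rmin_l th (PI - th)). assert (h2 := Rmin_r th (PI - th)).
    assert (0 < Rmin th (PI - th)) by (apply Rmin_glb_lt; lra). unfold de; lra. }
  destruct (phi_lim_left_B (fun v => Rabs (v - (2 * PI * INR n - th)) < de)) as [eta heta].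
  { exists (mkposreal de (proj1 hde)). intros v hv. apply hv. }
  destruct hphi as [_ [_ [_ [eps0 [heps0 hsemi]]]]].
  assert (hsmall : at_right 0 (fun e => (0 < e < eps0) /\ (0 < e < Rabs B / 2) /\
             (0 < e < 1 / (8 * RR)) /\ (0 < e < A ^ 2 / (40 * Rabs B)) /\ (0 < e < eta))).
  { apply filter_and; [apply at_right_0_between; lra|].
    apply filter_and; [apply at_right_0_between; lra|].
    apply filter_and; [apply at_right_0_between, Rdiv_lt_0_compat; lra|].
    apply filter_and; [apply at_right_0_between, Rdiv_lt_0_compat; lra|].
    apply at_right_0_between, cond_pos. }
  destruct (filter_ex _ hsmall) as [eps [he0 [he1 [he2 [he3 he4]]]]].
  assert (hRe : eps * (8 * RR) < 1) by (apply Rlt_div_r; lra).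
  assert (hAe : eps * (40 * Rabs B) < A ^ 2) by (apply Rlt_div_r; lra).
  destruct (hsemi eps ltac:(lra)) as [psi [hpsi [hpsi0 hpsiPI]]].
  assert (hinc := semicircle_arg_increment A B RR eps psi hA hR ltac:(lra) ltac:(lra)
                    ltac:(lra) hpsi).
  rewrite hpsi0, hpsiPI in hinc.
  assert (hleft : Rabs (phi (- Rabs B - eps) - (2 * PI * INR n - th)) < de).
  { apply heta; [|lra]. change (Rabs (- Rabs B - eps - - Rabs B) < eta).
    replace (- Rabs B - eps - - Rabs B) with (- eps) by ring.
    rewrite Rabs_Ropp, Rabs_pos_eq; lra. }
  apply Rabs_def2 in hleft.
  exists eps. split; lra.
Qed.

Lemma phi_right_branch k : - Rabs B < k < 0 -> 2 * PI * INR n < phi k < 2 * PI * INR n + PI.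
Proof.
  intro hk.
  destruct phi_across_B as [eps [heps hks]].
  set (ks := - Rabs B + eps) in *.
  assert (hks' : 2 * PI * INR n < phi ks < 2 * PI * INR n + PI).
  { destruct (exists_2PI_Z_near (phi ks)) as [q hq].
    destruct (sin_pos_strip _ q hq (sin_phi_right_pos ks ltac:(unfold ks; lra))) as [h1 h2].
    rewrite INR_IZR_INZ in *.
    replace (Z.of_nat n) with q by (apply Z_eq_of_Rabs_lt_1, Rabs_def1; nra).
    lra. }
  apply (strip_invariant_on_interval phi (fun x => - Rabs B < x < 0) _ _ ks k); auto.
  - intros x y t hx hy ht. lra.
  - intros t ht. assert (hs := sin_phi_right_pos t ht).
    split; [apply (phi_real_point t); lra|].
    rewrite INR_IZR_INZ. split; intro e; rewrite e in hs.
    + rewrite <- (Rplus_0_l (2 * PI * _)), sin_add_2PI_Z, sin_0 in hs. lra.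
    + rewrite Rplus_comm, sin_add_2PI_Z, sin_PI in hs. lra.
  - unfold ks; lra.
Qed.

Lemma phi_lim_right_B :
  filterlim phi (at_right (- Rabs B)) (locally (2 * PI * INR n + PI - 4 * Rabs B * RR)).
Proof.
  assert (hb := Rabs_B_pos).
  apply (polar_arg_limit phi (fun k => 4 * (B ^ 2 - k ^ 2) / A ^ 2 - cos (4 * k * RR))
           (fun k => - sin (4 * k * RR)) _ _ (2 * PI * INR n + PI / 2)); [reg|reg| |lra|].
  - exists 1. split; [lra|]. rewrite <- (pow2_abs B).
    replace (2 * PI * INR n + PI - 4 * Rabs B * RR)
      with ((4 * - Rabs B * RR + PI) + 2 * INR n * PI) by ring.
    rewrite cos_period, sin_period, neg_cos, neg_sin. split; [field; lra|ring].
  - exists (mkposreal (Rabs B) hb). intros k hk hkB.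
    change (Rabs (k - - Rabs B) < Rabs B) in hk. apply Rabs_def2 in hk.
    assert (hk' : - Rabs B < k < 0) by lra.
    split; [apply phi_polar_right, hk'|].
    assert (h := phi_right_branch k hk'). lra.
Qed.

Lemma phi_lim_0 L : polar_arg (1 - A ^ 2 / (4 * B ^ 2)) 0 L ->
  2 * PI * INR n - PI / 2 < L < 2 * PI * INR n + 3 * PI / 2 ->
  filterlim phi (at_left 0) (locally L).
Proof.
  intros hL hLn. assert (hb := Rabs_B_pos).
  assert (hB2 : 0 < B ^ 2) by (rewrite <- (pow2_abs B); apply pow_lt; lra).
  apply (polar_arg_limit phi (fun k => 1 + a1_coef A B k * cos (4 * k * RR))
           (fun k => a1_coef A B k * sin (4 * k * RR)) _ _ (2 * PI * INR n + PI / 2));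
    [unfold a1_coef; reg; lra|unfold a1_coef; reg; lra| |lra|].
  - unfold a1_coef. rewrite Rmult_0_r, Rmult_0_l, cos_0, sin_0, Rmult_0_r, Rmult_1_r.
    replace (4 * (0 ^ 2 - B ^ 2)) with (- (4 * B ^ 2)) by ring.
    replace (1 + A ^ 2 / - (4 * B ^ 2)) with (1 - A ^ 2 / (4 * B ^ 2)) by (field; intro e; rewrite e, Rabs_R0 in hb; lra).
    exact hL.
  - exists (mkposreal (Rabs B) hb). intros k hk hk0.
    change (Rabs (k - 0) < Rabs B) in hk. apply Rabs_def2 in hk.
    assert (hk' : - Rabs B < k < 0) by lra.
    split; [apply phi_polar; lra|].
    assert (h := phi_right_branch k hk'). lra.
Qed.

Lemma phi_at_omega j : (1 <= j <= n)%nat ->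
  phi (- (2 * INR (n - j + 1) - 1) * PI / (4 * RR)) = (2 * INR j - 1) * PI.
Proof.
  intro hj.
  assert (h := phi_node_value (j - 1) ltac:(lia) (strip_on_gap_all (j - 1) ltac:(lia))).
  replace (n - (j - 1))%nat with (S (n - j)) in h by lia.
  replace (n - j + 1)%nat with (S (n - j)) by lia.
  rewrite minus_INR in h by lia. simpl INR in h. unfold node in h. rewrite h. ring.
Qed.

Lemma phi_strip_omega j : (j <= n)%nat -> forall k : R,
  Rbar_lt (omega B RR n (n - j + 1)) (Finite k) -> Rbar_lt (Finite k) (omega B RR n (n - j)) ->
  2 * PI * INR j - PI < phi k < 2 * PI * INR j + PI.
Proof.
  intros hj k hlo hhi. apply (strip_on_gap_all j hj). split.
  - destruct j as [|j]; [left; reflexivity|right].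
    rewrite omega_node in hlo by lia. exact hlo.
  - rewrite omega_node in hhi by lia. exact hhi.
Qed.

Lemma phi_limits_at_B : exists theta, 0 < theta < PI /\
  filterlim phi (at_left (- Rabs B)) (locally (2 * PI * INR n - theta)) /\
  filterlim phi (at_right (- Rabs B)) (locally (2 * PI * INR n + PI - theta)).
Proof. exists (4 * Rabs B * RR). split; [exact hB|]. split; [apply phi_lim_left_B|apply phi_lim_right_B]. Qed.

Lemma phi_lim_0_pos : 4 * B ^ 2 - A ^ 2 > 0 ->
  filterlim phi (at_left 0) (locally (2 * PI * INR n)).
Proof.
  intro hAB.
  apply phi_lim_0; [|lra].
  exists ((4 * B ^ 2 - A ^ 2) / (4 * B ^ 2)). split; [apply Rdiv_lt_0_compat; nra|].
  rewrite <- (Rplus_0_l (2 * PI * INR n)), INR_IZR_INZ, cos_add_2PI_Z, sin_add_2PI_Z, cos_0, sin_0.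
  split; [field|ring]. nra.
Qed.

Lemma phi_lim_0_neg : 4 * B ^ 2 - A ^ 2 < 0 ->
  filterlim phi (at_left 0) (locally (2 * PI * INR n + PI)).
Proof.
  intro hAB. assert (hb := Rabs_B_pos).
  assert (hB2 : 0 < B ^ 2) by (rewrite <- (pow2_abs B); apply pow_lt; lra).
  apply phi_lim_0; [|lra].
  exists ((A ^ 2 - 4 * B ^ 2) / (4 * B ^ 2)). split; [apply Rdiv_lt_0_compat; lra|].
  rewrite Rplus_comm, INR_IZR_INZ, cos_add_2PI_Z, sin_add_2PI_Z, cos_PI, sin_PI.
  split; [field|ring]. intro e. rewrite e, Rabs_R0 in hb. lra.
Qed.

End Regime.

End Branch.

Lemma regime_0 A B RR : 0 < A -> 0 < RR -> RR < PI / Rcrit A B ->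
  (2 * INR 0 - 1) * PI / Rcrit A B < RR < (2 * INR 0 + 1) * PI / Rcrit A B.
Proof.
  intros hA hR h. simpl INR. rewrite Rmult_0_r, Rminus_0_l, Rplus_0_l, Rmult_1_l.
  split; [|exact h]. apply (Rlt_trans _ 0); [|exact hR].
  apply Rdiv_neg_pos; [assert (hp := PI_RGT_0); lra|apply Rcrit_pos, hA].
Qed.
Theorem proposition6 (A B RR : R) (phi : R -> R) :
  0 < A -> 0 < RR -> 0 < 4 * Rabs B * RR < PI ->
  is_phi A B RR phi ->
  (* 1) *)
  (RR < PI / Rcrit A B ->
     (forall k, k < - Rabs B -> - PI < phi k < PI) /\
     (exists theta, 0 < theta < PI /\
        filterlim phi (at_left (- Rabs B)) (locally (- theta)) /\
        filterlim phi (at_right (- Rabs B)) (locally (PI - theta))) /\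
     (forall k, - Rabs B < k < 0 -> 0 < phi k < PI)) /\
  (* 2) *)
  (forall n : nat, (1 <= n)%nat ->
     (2 * INR n - 1) * PI / Rcrit A B < RR < (2 * INR n + 1) * PI / Rcrit A B ->
     (forall j : nat, (1 <= j <= n)%nat ->
        phi (- (2 * INR (n - j + 1) - 1) * PI / (4 * RR)) = (2 * INR j - 1) * PI) /\
     (forall j : nat, (j <= n)%nat -> forall k,
        Rbar_lt (omega B RR n (n - j + 1)) (Finite k) ->
        Rbar_lt (Finite k) (omega B RR n (n - j)) ->
        2 * PI * INR j - PI < phi k < 2 * PI * INR j + PI) /\
     (exists theta, 0 < theta < PI /\
        filterlim phi (at_left (- Rabs B)) (locally (2 * PI * INR n - theta)) /\
        filterlim phi (at_right (- Rabs B)) (locally (2 * PI * INR n + PI - theta))) /\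
     (forall k, - Rabs B < k < 0 -> 2 * PI * INR n < phi k < 2 * PI * INR n + PI)) /\
  (* 3) *)
  (4 * B ^ 2 - A ^ 2 > 0 ->
     (RR < PI / Rcrit A B -> filterlim phi (at_left 0) (locally 0)) /\
     (forall n : nat, (1 <= n)%nat ->
        (2 * INR n - 1) * PI / Rcrit A B < RR < (2 * INR n + 1) * PI / Rcrit A B ->
        filterlim phi (at_left 0) (locally (2 * PI * INR n)))) /\
  (4 * B ^ 2 - A ^ 2 < 0 ->
     (RR < PI / Rcrit A B -> filterlim phi (at_left 0) (locally PI)) /\
     (forall n : nat, (1 <= n)%nat ->
        (2 * INR n - 1) * PI / Rcrit A B < RR < (2 * INR n + 1) * PI / Rcrit A B ->
        filterlim phi (at_left 0) (locally (2 * PI * INR n + PI)))).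
Proof.
  intros hA hR hB hphi.
  split; [|split; [|split]].
  - intro hsmall. assert (hn := regime_0 A B RR hA hR hsmall). split; [|split].
    + intros k hk.
      (* [omega B RR 0 1] computes to [m_infty], so [I] proves the lower bound *)
      assert (h := phi_strip_omega A B RR phi hA hR hB hphi 0 hn 0 (le_n 0) k I hk).
      simpl INR in h. lra.
    + destruct (phi_limits_at_B A B RR phi hA hR hB hphi 0 hn) as [th [hth [hl hr]]].
      simpl INR in hl, hr. rewrite Rmult_0_r, Rminus_0_l in hl. rewrite Rmult_0_r, Rplus_0_l in hr.
      exists th. auto.
    + intros k hk. assert (h := phi_right_branch A B RR phi hA hR hB hphi 0 hn k hk).
      simpl INR in h. lra.
  - intros n _ hn. split; [|split; [|split]].
    + exact (phi_at_omega A B RR phi hA hR hB hphi n hn).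
    + exact (phi_strip_omega A B RR phi hA hR hB hphi n hn).
    + exact (phi_limits_at_B A B RR phi hA hR hB hphi n hn).
    + exact (phi_right_branch A B RR phi hA hR hB hphi n hn).
  - intro hAB. split.
    + intro hsmall.
      assert (h := phi_lim_0_pos A B RR phi hA hR hB hphi 0 (regime_0 A B RR hA hR hsmall) hAB).
      simpl INR in h. rewrite Rmult_0_r in h. exact h.
    + intros n _ hn. exact (phi_lim_0_pos A B RR phi hA hR hB hphi n hn hAB).
  - intro hAB. split.
    + intro hsmall.
      assert (h := phi_lim_0_neg A B RR phi hA hR hB hphi 0 (regime_0 A B RR hA hR hsmall) hAB).
      simpl INR in h. rewrite Rmult_0_r, Rplus_0_l in h. exact h.
    + intros n _ hn. exact (phi_lim_0_neg A B RR phi hA hR hB hphi n hn hAB).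
Qed.
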